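(* Let $G=\bigl((f_j)_{j=1}^n;(\mu^{R})_{\emptyset\ne R\subseteq[n]}\bigr)$ be an $n$-resource selection game. (a) Every Nash equilibrium of $G$ is a strong Nash equilibrium. (b) If there exists a Nash equilibrium $s$ of $G$ such that for every $j\in[n]$, $h^s_j$ is not a plateau height of $f_j$, then every Nash equilibrium of $G$ is a super-strong Nash equilibrium.
   Context: Write $[n]=\{1,\ldots,n\}$ and $\mathbb{R}_{\ge}=[0,\infty)$. An $n$-resource selection game is a pair $G=\bigl((f_j)_{j=1}^n;(\mu^{R})_{\emptyset\ne R\subseteq[n]}\bigr)$ where each $f_j:\mathbb{R}_{\ge}\to\mathbb{R}$ is nondecreasing and $\mu^R\in\mathbb{R}_{\ge}$ for every nonempty $R\subseteq[n]$. A consumption profile is a map $s$ assigning to each nonempty $R\subseteq[n]$ a vector $s(R)\in\mathbb{R}_{\ge}^{[n]}$ with $s_j(R)=0$ for $j\notin R$ and $\sum_{j}s_j(R)=\mu^R$. The load of resource $j$ is $\mu^s_j=\sum_{R}s_j(R)$ and its cost is $h^s_j=f_j(\mu^s_j)$. $s$ is a Nash equilibrium if for every nonempty $R$, every $k$ with $s_k(R)>0$ and every $j\in R$, $h^s_k\le h^s_j$. For a Nash equilibrium $s$ and $R$ with $\mu^R>0$, let $h^R=h^s_k$ for any $k$ with $s_k(R)>0$. A Nash equilibrium $s$ is strong if there is no consumption profile $s'\ne s$ such that for every $R$ and every $k$ with $s'_k(R)>s_k(R)$, $h^{s'}_k<h^R$. It is super-strong if there is no consumption profile $s'$ such that for every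 $R$ and every $k$ with $s'_k(R)>s_k(R)$, $h^{s'}_k\le h^R$, and additionally there is at least one pair $(R,k)$ with $s'_k(R)>0$ and $h^{s'}_k<h^R$. A real $h$ is a plateau height of a nondecreasing $f$ if there are $x\ne y$ with $f(x)=f(y)=h$. *)

(* resources are 'I_n, subsets R of [n] are {set 'I_n},
   reals are an arbitrary realFieldType (statement is purely order-algebraic). *)
From HB Require Import structures.
From mathcomp Require Import all_boot all_order all_algebra.
Set Implicit Arguments. Unset Strict Implicit. Unset Printing Implicit Defensive.
Import Order.TTheory GRing.Theory Num.Theory.
Local Open Scope ring_scope.

Section Game.
Variables (R : realFieldType) (n : nat).
(* cost functions f_j, defined (meaningfully) on [0, oo) *)
Variable f : 'I_n -> R -> R.
Variable mu : {set 'I_n} -> R.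

Definition is_game : Prop :=
  (forall j x y, 0 <= x -> x <= y -> f j x <= f j y) /\
  (forall A : {set 'I_n}, A != set0 -> 0 <= mu A).

(* profiles: s A j = s_j(A) *)
Definition profile := {set 'I_n} -> 'I_n -> R.

Definition consumption_profile (s : profile) : Prop :=
  forall A : {set 'I_n}, A != set0 ->
    (forall j, 0 <= s A j) /\ (forall j, j \notin A -> s A j = 0) /\
    \sum_j s A j = mu A.

Definition load (s : profile) (j : 'I_n) : R :=
  \sum_(A : {set 'I_n} | A != set0) s A j.

Definition cost (s : profile) (j : 'I_n) : R := f j (load s j).

Definition nash (s : profile) : Prop :=
  forall A : {set 'I_n}, A != set0 ->
    forall k j, 0 < s A k -> j \in A -> cost s k <= cost s j.

(* h^A = cost of any resource k with s_k(A) > 0; "c < h^A" is rendered as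
   "c < cost s k for every k with s_k(A) > 0" (all these costs coincide at a
   Nash equilibrium, and such k exists whenever it is used below). *)
Definition lt_hR (s : profile) (A : {set 'I_n}) (c : R) : Prop :=
  forall k, 0 < s A k -> c < cost s k.
Definition le_hR (s : profile) (A : {set 'I_n}) (c : R) : Prop :=
  forall k, 0 < s A k -> c <= cost s k.

Definition profile_neq (s s' : profile) : Prop :=
  exists A : {set 'I_n}, A != set0 /\ exists j, s' A j <> s A j.

Definition strong_nash (s : profile) : Prop :=
  nash s /\
  ~ exists s' : profile, consumption_profile s' /\ profile_neq s s' /\
      forall A : {set 'I_n}, A != set0 ->
        forall k, s' A k > s A k -> lt_hR s A (cost s' k).

Definition super_strong_nash (s : profile) : Prop :=
  nash s /\
  ~ exists s' : profile, consumption_profile s' /\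
      (forall A : {set 'I_n}, A != set0 ->
        forall k, s' A k > s A k -> le_hR s A (cost s' k)) /\
      (exists A : {set 'I_n}, A != set0 /\
        exists k, 0 < s' A k /\ lt_hR s A (cost s' k)).
End Game.

Definition plateau_height (R : realFieldType) (g : R -> R) (h : R) : Prop :=
  exists x y, 0 <= x /\ 0 <= y /\ x <> y /\ g x = h /\ g y = h.

(* (a) Against a coalitional deviation s' in which every resource that gains
   consumption becomes strictly cheaper than at the Nash equilibrium s, costs
   fall on every such resource, hence (costs being nondecreasing) so do their
   loads; the other loads cannot grow at all. Total load is conserved, so all
   loads are unchanged, and no resource can have become strictly cheaper.
   (b) With weak inequalities the same argument needs "cost not larger implies
   load not larger", which is exactly the absence of a plateau at the
   equilibrium cost. That hypothesis passes between Nash equilibria: by the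
   variational inequality and monotonicity, two equilibria give every
   resource either the same load or the same cost. *)

From HB Require Import structures.
From mathcomp Require Import all_boot all_order all_algebra.
From mathcomp Require Import ring.
Import Order.TTheory GRing.Theory Num.Theory.
Local Open Scope ring_scope.

Set Implicit Arguments. Unset Strict Implicit.

Lemma eq_of_ler_sum (R : numDomainType) (I : finType) (P : pred I) (a b : I -> R) :
  (forall i, P i -> a i <= b i) -> \sum_(i | P i) a i = \sum_(i | P i) b i ->
  forall i, P i -> a i = b i.
Proof.
move=> le_ab sum_ab i Pi.
have sum_ba0 : \sum_(i | P i) (b i - a i) = 0 by rewrite sumrB sum_ab subrr.
have ba_ge0 k : P k -> 0 <= b k - a k by move=> Pk; rewrite subr_ge0 le_ab.
by apply/eqP; rewrite eq_sym -subr_eq0; apply/eqP/(psumr_eq0P ba_ge0).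
Qed.

Lemma ler_sum_mulr_argmin (R : numDomainType) (I : finType) (A : {set I})
    (s t c : I -> R) :
  (forall i, 0 <= s i) -> (forall i, 0 <= t i) ->
  (forall i, i \notin A -> s i = 0) -> (forall i, i \notin A -> t i = 0) ->
  \sum_i s i = \sum_i t i ->
  (forall k j, 0 < s k -> j \in A -> c k <= c j) ->
  \sum_i s i * c i <= \sum_i t i * c i.
Proof.
move=> s_ge0 t_ge0 sA tA sum_st cmin.
have s_inA k : 0 < s k -> k \in A.
  by move=> sk; apply/negPn/negP => /sA sk0; rewrite sk0 ltxx in sk.
case: (pickP (fun k => 0 < s k)) => [k sk | s_le0].
  have scE j : s j * c j = s j * c k.
    have [sj | ] := boolP (0 < s j).
      by congr (_ * _); apply/le_anti; rewrite !cmin ?s_inA.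
    by rewrite lt_def s_ge0 andbT negbK => /eqP ->; rewrite !mul0r.
  rewrite (eq_bigr _ (fun j _ => scE j)) -mulr_suml sum_st mulr_suml.
  apply: ler_sum => j _; have [jA | /tA -> ] := boolP (j \in A).
    by rewrite ler_wpM2l ?cmin.
  by rewrite !mul0r.
have s0 j : s j = 0.
  by apply/eqP; move: (s_le0 j); rewrite /= lt_def s_ge0 andbT => /negbFE.
have t0 j : t j = 0.
  apply: (psumr_eq0P (P := predT) (fun i _ => t_ge0 i)) => //.
  by rewrite -sum_st big1.
by rewrite !big1 // => j _; rewrite ?s0 ?t0 mul0r.
Qed.

Section Nondecreasing.
Variables (R : realFieldType) (g : R -> R).
Hypothesis g_mono : forall x y, 0 <= x -> x <= y -> g x <= g y.

Lemma lt_of_mono_lt x y : 0 <= y -> g x < g y -> x < y.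
Proof.
move=> y_ge0 gxy; rewrite ltNge; apply/negP => yx.
by rewrite ltNge g_mono in gxy.
Qed.

Lemma le_of_mono_le_nonplateau x y : 0 <= x -> 0 <= y ->
  ~ plateau_height g (g y) -> g x <= g y -> x <= y.
Proof.
move=> x_ge0 y_ge0 flat gxy; rewrite leNgt; apply/negP => yx; apply: flat.
exists x, y; do 3!split => //; first by move=> xy; rewrite xy ltxx in yx.
by split=> //; apply/le_anti; rewrite gxy g_mono // ltW.
Qed.

Lemma mono_cross_le0 x y : 0 <= x -> 0 <= y -> (x - y) * (g y - g x) <= 0.
Proof.
move=> x_ge0 y_ge0; have [xy | yx] := leP x y.
  by rewrite mulr_le0_ge0 ?subr_le0 ?subr_ge0 ?g_mono.
by rewrite mulr_ge0_le0 ?subr_le0 ?subr_ge0 ?g_mono // ltW.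
Qed.
End Nondecreasing.

Section ConsumptionProfiles.
Variables (R : realFieldType) (n : nat) (mu : {set 'I_n} -> R).
Implicit Types (s t : profile R n) (A : {set 'I_n}).

Lemma support_sub s A k : consumption_profile mu s -> A != set0 ->
  0 < s A k -> k \in A.
Proof.
move=> hs hA sk; apply/negPn/negP => /(proj1 (proj2 (hs A hA))) sk0.
by rewrite sk0 ltxx in sk.
Qed.

Lemma mu_gt0 s A k : consumption_profile mu s -> A != set0 -> 0 < s A k -> 0 < mu A.
Proof.
move=> hs hA sk; have [s_ge0 [_ <-]] := hs A hA.
by rewrite (bigD1 k) //= ltr_wpDr // sumr_ge0.
Qed.

Lemma support_exists s A : consumption_profile mu s -> A != set0 -> 0 < mu A ->
  exists k, 0 < s A k.
Proof.
move=> hs hA; have [s_ge0 [_ <-]] := hs A hA.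
case: (pickP (fun k => 0 < s A k)) => [k sk | s_le0]; first by exists k.
by rewrite big1 ?ltxx // => j _; apply/eqP; rewrite eq_le s_ge0 andbT leNgt s_le0.
Qed.

Lemma exists_increase s s' : consumption_profile mu s -> consumption_profile mu s' ->
  profile_neq s s' -> exists A k, A != set0 /\ s A k < s' A k.
Proof.
move=> hs hs' [A [hA [j s'j]]].
case: (pickP (fun k => s A k < s' A k)) => [k sk | no_incr]; first by exists A, k.
exfalso; apply: s'j; apply: (@eq_of_ler_sum _ _ predT) => //.
  by move=> i _; rewrite leNgt no_incr.
by rewrite (proj2 (proj2 (hs A hA))) (proj2 (proj2 (hs' A hA))).
Qed.

Lemma load_ge0 s : consumption_profile mu s -> forall j, 0 <= load s j.
Proof. by move=> hs j; apply: sumr_ge0 => A hA; apply: (proj1 (hs A hA)). Qed.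

Lemma sum_load s : consumption_profile mu s ->
  \sum_j load s j = \sum_(A : {set 'I_n} | A != set0) mu A.
Proof.
move=> hs; rewrite /load exchange_big /=; apply: eq_bigr => A hA.
exact: (proj2 (proj2 (hs A hA))).
Qed.

Lemma load_eq_of_le s s' : consumption_profile mu s -> consumption_profile mu s' ->
  (forall j, load s' j <= load s j) -> forall j, load s' j = load s j.
Proof.
move=> hs hs' le_load j; apply: (@eq_of_ler_sum _ _ predT) => //.
by rewrite (sum_load hs) (sum_load hs').
Qed.

Lemma load_le_of_increase s s' j :
  (forall A, A != set0 -> s A j < s' A j -> load s' j <= load s j) ->
  load s' j <= load s j.
Proof.
move=> incr_le.
case: (pickP (fun A : {set 'I_n} => (A != set0) && (s A j < s' A j))).
  by move=> A /andP[hA hj]; apply: incr_le hA hj.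
move=> no_incr; apply: ler_sum => A hA; rewrite leNgt.
by apply/negP => hj; move: (no_incr A); rewrite hA hj.
Qed.
End ConsumptionProfiles.

Section NashEquilibria.
Variables (R : realFieldType) (n : nat).
Variables (f : 'I_n -> R -> R) (mu : {set 'I_n} -> R).
Hypothesis f_mono : forall j x y, 0 <= x -> x <= y -> f j x <= f j y.
Implicit Types (s t : profile R n) (A : {set 'I_n}).

Lemma nash_variational_ineq s t :
  consumption_profile mu s -> consumption_profile mu t -> nash f s ->
  \sum_j load s j * cost f s j <= \sum_j load t j * cost f s j.
Proof.
move=> hs ht hn; rewrite /load.
under eq_bigr do rewrite mulr_suml.
under [X in _ <= X]eq_bigr do rewrite mulr_suml.
rewrite exchange_big [X in _ <= X]exchange_big /=.
apply: ler_sum => A hA.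
have [s_ge0 [sA sum_s]] := hs A hA; have [t_ge0 [tA sum_t]] := ht A hA.
apply: (ler_sum_mulr_argmin (A := A)) => //; first by rewrite sum_s sum_t.
exact: hn A hA.
Qed.

Lemma nash_load_or_cost_eq s t :
  consumption_profile mu s -> consumption_profile mu t -> nash f s -> nash f t ->
  forall j, load s j = load t j \/ cost f s j = cost f t j.
Proof.
move=> hs ht hns hnt.
pose d j := (load t j - load s j) * (cost f s j - cost f t j).
have d_le0 j : d j <= 0.
  exact: (mono_cross_le0 (f_mono j) (load_ge0 ht j) (load_ge0 hs j)).
have sum_d_ge0 : 0 <= \sum_j d j.
  have -> : \sum_j d j =
      (\sum_j load t j * cost f s j - \sum_j load s j * cost f s j)
    + (\sum_j load s j * cost f t j - \sum_j load t j * cost f t j).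
    by rewrite -!sumrB -big_split /=; apply: eq_bigr => j _; rewrite /d; ring.
  by rewrite addr_ge0 // subr_ge0 nash_variational_ineq.
have sum_d0 : \sum_j d j = \sum_(j < n) 0.
  by apply/le_anti; rewrite ler_sum // big1_eq sum_d_ge0.
move=> j; have /eqP := eq_of_ler_sum (P := predT) (fun j _ => d_le0 j) sum_d0 (i := j) isT.
rewrite mulf_eq0 !subr_eq0 => /orP[/eqP -> | /eqP ->]; by [left | right].
Qed.

(* [cost f s k'] is the equilibrium cost h^A. *)
Lemma nash_increase_cost_le s s' A k :
  consumption_profile mu s -> consumption_profile mu s' -> nash f s ->
  A != set0 -> s A k < s' A k ->
  exists2 k', 0 < s A k' & cost f s k' <= cost f s k.
Proof.
move=> hs hs' hn hA sk.
have s'k : 0 < s' A k := le_lt_trans (proj1 (hs A hA) k) sk.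
have [k' sk'] := support_exists hs hA (mu_gt0 hs' hA s'k).
by exists k' => //; apply: hn hA _ _ sk' (support_sub hs' hA s'k).
Qed.

Lemma strong_nash_of_nash s :
  consumption_profile mu s -> nash f s -> strong_nash f mu s.
Proof.
move=> hs hn; split=> // -[s' [hs' [neq dev]]].
have cost_lt A j : A != set0 -> s A j < s' A j -> cost f s' j < cost f s j.
  move=> hA hj; have [k sk cost_k] := nash_increase_cost_le hs hs' hn hA hj.
  exact: lt_le_trans (dev A hA j hj k sk) cost_k.
have loads_eq : forall j, load s' j = load s j.
  apply: (load_eq_of_le hs hs') => j; apply: load_le_of_increase => A hA hj.
  exact/ltW/(lt_of_mono_lt (f_mono j) (load_ge0 hs j))/(cost_lt A j hA hj).
have [A [k [hA hk]]] := exists_increase hs hs' neq.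
by have := cost_lt A k hA hk; rewrite /cost loads_eq ltxx.
Qed.

Lemma super_strong_nash_of_nash s :
  consumption_profile mu s -> nash f s ->
  (forall j, ~ plateau_height (f j) (cost f s j)) -> super_strong_nash f mu s.
Proof.
move=> hs hn flat; split=> // -[s' [hs' [dev [A [hA [k [s'k k_cheaper]]]]]]].
have loads_eq : forall j, load s' j = load s j.
  apply: (load_eq_of_le hs hs') => j; apply: load_le_of_increase => B hB hj.
  have [k' sk' cost_k'] := nash_increase_cost_le hs hs' hn hB hj.
  apply: (le_of_mono_le_nonplateau (f_mono j) (load_ge0 hs' j) (load_ge0 hs j) (flat j)).
  exact: le_trans (dev B hB j hj k' sk') cost_k'.
have [k' sk'] := support_exists hs hA (mu_gt0 hs' hA s'k).
have := lt_le_trans (k_cheaper k' sk') (hn A hA k' k sk' (support_sub hs' hA s'k)).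
by rewrite /cost loads_eq ltxx.
Qed.
End NashEquilibria.

Theorem mainTheorem4 (R : realFieldType) (n : nat)
  (f : 'I_n -> R -> R) (mu : {set 'I_n} -> R) :
  is_game f mu ->
  (forall s : profile R n, consumption_profile mu s -> nash f s ->
     strong_nash f mu s) /\
  ((exists s0 : profile R n, consumption_profile mu s0 /\ nash f s0 /\
      forall j, ~ plateau_height (f j) (cost f s0 j)) ->
   forall s : profile R n, consumption_profile mu s -> nash f s ->
     super_strong_nash f mu s).
Proof.
move=> [f_mono _]; split=> [s | [s0 [hs0 [hn0 flat0]]] s hs hn].
  exact: strong_nash_of_nash.
apply: super_strong_nash_of_nash => // j.
have [load_eq | cost_eq] := nash_load_or_cost_eq f_mono hs hs0 hn hn0 j.
  by rewrite /cost load_eq; apply: flat0.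
by rewrite cost_eq; apply: flat0.
Qed.
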